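(* Let $n\in\mathbb{N}$, $H\in\mathbb{R}^{n\times n}$, $W\in\mathbb{R}^{n\times n}$ with $W\succ 0$, let $C=\mathrm{diag}(C_{11},\dots,C_{nn})$ be diagonal with all $C_{ii}\neq 0$, and let $V=\mathrm{diag}(\sigma_1^2,\dots,\sigma_n^2)$ with all $\sigma_i>0$. Assume $(H,C)$ is observable and $(H,D)$ is controllable, where $W=DD^T$. Let $\Sigma$ be the unique positive semidefinite solution of $$\Sigma = H\Sigma H^T - H\Sigma C^T(C\Sigma C^T+V)^{-1}C\Sigma H^T + W ,$$ and let $\overline{\Sigma}:=(C^TV^{-1}C+\Sigma^{-1})^{-1}$. Then $$\frac{n\,\sigma_u^2}{C_u^2+\sigma_u^2\,\lambda_n(W)^{-1}}\;\le\;\mathrm{tr}\,\overline{\Sigma}\;\le\; n\,\frac{\sigma_l^2}{C_l^2}.$$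
   Context: This models a linear system $x(k+1)=Hx(k)+w(k)$, $w(k)\sim\mathcal N(0,W)$, whose outputs $Cx(k)$ are privatized by adding Gaussian noise $v(k)\sim\mathcal N(0,V)$ before being processed by a steady-state Kalman filter; $\Sigma$ is the steady-state a priori error covariance and $\overline\Sigma$ the steady-state a posteriori error covariance (its trace is the steady-state mean squared estimation error). For a symmetric matrix $K$, $\lambda_n(K)\le\dots\le\lambda_1(K)$ denote its eigenvalues. Indices: $l:=\arg\min_{1\le i\le n} C_{ii}^2/\sigma_i^2$ and $u:=\arg\max_{1\le i\le n} C_{ii}^2/\sigma_i^2$; $C_l:=C_{ll}$, $C_u:=C_{uu}$, and $\sigma_l,\sigma_u$ are the corresponding $\sigma_i$. *)

From HB Require Import structures.
From mathcomp Require Import all_boot all_order all_algebra.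
Set Implicit Arguments. Unset Strict Implicit. Unset Printing Implicit Defensive.
Import Order.TTheory GRing.Theory Num.Theory.
Local Open Scope ring_scope.

Definition psd (R : realFieldType) (n : nat) (A : 'M[R]_n) : Prop :=
  A^T = A /\ forall v : 'cV[R]_n, 0 <= (v^T *m A *m v) 0 0.

Definition pd (R : realFieldType) (n : nat) (A : 'M[R]_n) : Prop :=
  A^T = A /\ forall v : 'cV[R]_n, v != 0 -> 0 < (v^T *m A *m v) 0 0.

(* (H, C) observable: the observability matrix [C; CH; ...; CH^(n-1)] has rank n
   (rank of a stacked matrix = rank of the sum of the row spaces of its blocks) *)
Definition observable (R : fieldType) (n p : nat) (H : 'M[R]_n) (C : 'M[R]_(p, n)) : Prop :=
  \rank (\sum_(k < n) <<C *m H ^+ k>>)%MS = n.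

(* (H, D) controllable: the controllability matrix [D, HD, ..., H^(n-1) D] has rank n
   (stated via its transpose) *)
Definition controllable (R : fieldType) (n m : nat) (H : 'M[R]_n) (D : 'M[R]_(n, m)) : Prop :=
  \rank (\sum_(k < n) <<(H ^+ k *m D)^T>>)%MS = n.

Definition is_min_eigenvalue (R : realFieldType) (n : nat) (W : 'M[R]_n) (lam : R) : Prop :=
  eigenvalue W lam /\ forall a, eigenvalue W a -> lam <= a.

From HB Require Import structures.
From mathcomp Require Import all_boot all_order all_algebra.
From mathcomp Require Import complex.
From mathcomp Require Import ring lra.
Set Implicit Arguments. Unset Strict Implicit. Unset Printing Implicit Defensive.
Import Order.TTheory GRing.Theory Num.Theory.
Local Open Scope ring_scope.

(* Write P := Sigma^-1 and dd_i := c_i^2 / sigma_i^2, so that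
   Sigmabar = (diag(dd) + P)^-1.  Everything is argued with quadratic forms:
   - the Riccati equation says Sigma - W = H M H^T with M a Schur complement,
     which is positive semidefinite; hence W <= Sigma as forms;
   - the complex spectral theorem gives W >= lam I, so Sigma >= lam I, and a
     form bounded below by d x_i^2 has (inverse)_ii <= 1/d: P_ii <= 1/lam;
   - for A := diag(dd) + P one has 1/A_ii <= (A^-1)_ii (Cauchy-Schwarz for the
     psd form of A) and (A^-1)_ii <= 1/dd_i (A >= diag(dd)); hence
     1/(dd_i + 1/lam) <= Sigmabar_ii <= 1/dd_i;
   - summing over the diagonal, with dd_l <= dd_i <= dd_u, gives the theorem. *)

Section QuadraticForms.
Variable R : realFieldType.

Definition qform n (A : 'M[R]_n) (x : 'cV[R]_n) : R := (x^T *m A *m x) 0 0.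

Lemma qformD n (A B : 'M[R]_n) x : qform (A + B) x = qform A x + qform B x.
Proof. by rewrite /qform mulmxDr mulmxDl mxE. Qed.

Lemma qform_congr n (A B : 'M[R]_n) x : qform (B *m A *m B^T) x = qform A (B^T *m x).
Proof. by rewrite /qform trmx_mul trmxK !mulmxA. Qed.

Lemma qform_delta n (A : 'M[R]_n) i : qform A (delta_mx i 0) = A i i.
Proof. by rewrite /qform trmx_delta -rowE -colE !mxE. Qed.

Lemma qform_line n (A : 'M[R]_n) u z t :
  qform A (u - t *: z) =
  qform A u - t * ((u^T *m A *m z) 0 0 + (z^T *m A *m u) 0 0) + t ^+ 2 * qform A z.
Proof.
rewrite /qform; have -> : (u - t *: z)^T = u^T - t *: z^T by rewrite linearB linearZ.
rewrite mulmxBl mulmxBr !mulmxBl.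
by rewrite -!scalemxAl -!scalemxAr !mxE expr2; ring.
Qed.

Lemma qform_diag n (d : 'rV[R]_n) (x : 'cV[R]_n) :
  qform (diag_mx d) x = \sum_j d 0 j * x j 0 ^+ 2.
Proof.
rewrite /qform mul_mx_diag mxE; apply: eq_bigr => j _.
by rewrite !mxE expr2; ring.
Qed.

Lemma qform_diag_ge0 n (d : 'rV[R]_n) (x : 'cV[R]_n) :
  (forall j, 0 <= d 0 j) -> 0 <= qform (diag_mx d) x.
Proof.
by move=> d_ge0; rewrite qform_diag sumr_ge0 // => j _; rewrite mulr_ge0 ?sqr_ge0.
Qed.

Lemma qform_diag_term n (d : 'rV[R]_n) (x : 'cV[R]_n) i : (forall j, 0 <= d 0 j) ->
  d 0 i * x i 0 ^+ 2 <= qform (diag_mx d) x.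
Proof.
move=> d_ge0; rewrite qform_diag (bigD1 i) //= lerDl.
by apply: sumr_ge0 => j _; rewrite mulr_ge0 ?sqr_ge0.
Qed.

Lemma qform_diag_gt0 n (d : 'rV[R]_n) (x : 'cV[R]_n) :
  (forall j, 0 < d 0 j) -> x != 0 -> 0 < qform (diag_mx d) x.
Proof.
move=> d_gt0 x_neq0; have [j xj_neq0] : exists j, x j 0 != 0.
  apply/existsP; apply: contraR x_neq0 => /existsPn x0; apply/eqP/matrixP => i k.
  by rewrite ord1 mxE; apply/eqP; have := x0 i; rewrite negbK.
apply: lt_le_trans (qform_diag_term x j (fun k => ltW (d_gt0 k))).
by rewrite mulr_gt0 // exprn_even_gt0.
Qed.

Lemma qform_pd_unit n (A : 'M[R]_n) :
  (forall x, x != 0 -> 0 < qform A x) -> A \in unitmx.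
Proof.
move=> A_pd; rewrite -row_free_unit -kermx_eq0; apply: contraT => K_neq0.
have [i Ki_neq0] : exists i, row i (kermx A) != 0.
  apply/existsP; apply: contraR K_neq0 => /existsPn K0; apply/eqP/row_matrixP => i.
  by have := K0 i; rewrite negbK linear0 => /eqP.
have := A_pd (row i (kermx A))^T; rewrite trmx_eq0 => /(_ Ki_neq0).
by rewrite /qform trmxK -row_mul mulmx_ker row0 mul0mx mxE ltxx.
Qed.

Lemma qform_inv_col n (A : 'M[R]_n) i : A \in unitmx ->
  let x : 'cV[R]_n := invmx A *m delta_mx i 0 in
  [/\ qform A x = invmx A i i, x i 0 = invmx A i i &
      ((delta_mx i 0 : 'cV[R]_n)^T *m A *m x) 0 0 = 1].
Proof.
move=> A_unit x.
have Ax : A *m x = delta_mx i 0 by rewrite /x mulmxA mulmxV // mul1mx.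
have xi : x i 0 = invmx A i i by rewrite /x -colE mxE.
split=> //; first by rewrite /qform -mulmxA Ax -colE mxE mxE xi.
by rewrite -mulmxA Ax trmx_delta mul_delta_mx mxE !eqxx.
Qed.

Lemma invmx_diag_le n (A : 'M[R]_n) i d : A \in unitmx -> 0 < d ->
  (forall x : 'cV[R]_n, d * x i 0 ^+ 2 <= qform A x) -> invmx A i i <= d^-1.
Proof.
move=> A_unit d_gt0 A_ge; have [qx xi _] := qform_inv_col i A_unit.
have := A_ge (invmx A *m delta_mx i 0); rewrite qx xi; set a := invmx A i i => le_a.
rewrite -(ler_pM2l d_gt0) mulfV ?gt_eqF //; case: (lerP (d * a) 1) => // da_gt1.
have a_gt0 : 0 < a by rewrite -(pmulr_rgt0 _ d_gt0) (lt_trans _ da_gt1).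
suff : a < d * a ^+ 2 by rewrite ltNge le_a.
by rewrite expr2 mulrA -{1}(mul1r a) ltr_pM2r.
Qed.

Lemma invmx_diag_ge n (A : 'M[R]_n) i : A^T = A -> A \in unitmx ->
  (forall x, 0 <= qform A x) -> 0 < A i i -> (A i i)^-1 <= invmx A i i.
Proof.
move=> A_sym A_unit A_psd Aii_gt0; have [qx _ ex] := qform_inv_col i A_unit.
set x := invmx A *m delta_mx i 0 in qx ex.
have xe : (x^T *m A *m (delta_mx i 0 : 'cV[R]_n)) 0 0 = 1.
  have tr_eq : (x^T *m A *m delta_mx i 0)^T = (delta_mx i 0 : 'cV[R]_n)^T *m A *m x.
    by rewrite !trmx_mul !trmxK A_sym /x !mulmxA.
  by rewrite -ex -tr_eq [RHS]mxE.
have := A_psd (delta_mx i 0 - A i i *: x).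
rewrite qform_line qform_delta qx ex xe => h.
rewrite -(ler_pM2l Aii_gt0) mulfV ?gt_eqF //.
have : 0 <= A i i * (A i i * invmx A i i - 1) by lra.
by rewrite pmulr_rge0 // subr_ge0.
Qed.

(* Schur complement: for positive semidefinite S and V, the form of
   S - S C^T (C S C^T + V)^-1 C S is nonnegative (it is the posterior
   covariance of a linear-Gaussian measurement update). *)
Lemma schur_complement_psd n (S C V : 'M[R]_n) :
  (forall x, 0 <= qform S x) -> (forall x, 0 <= qform V x) ->
  C *m S *m C^T + V \in unitmx ->
  forall x, 0 <= qform (S - S *m C^T *m invmx (C *m S *m C^T + V) *m C *m S) x.
Proof.
move=> S_psd V_psd K_unit x; set K := C *m S *m C^T + V.
pose y := invmx K *m (C *m S *m x).
pose b := (x^T *m S *m C^T *m y) 0 0.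
pose b' := (y^T *m C *m S *m x) 0 0.
pose c := (y^T *m C *m S *m C^T *m y) 0 0.
have form_eq : qform (S - S *m C^T *m invmx K *m C *m S) x = qform S x - b.
  by rewrite /qform mulmxBr mulmxBl mxE [in X in _ + X]mxE /b /y !mulmxA.
have line_eq : qform S (x - C^T *m y) = qform S x - (b + b') + c.
  rewrite -[C^T *m y]scale1r qform_line expr1n !mul1r.
  by rewrite /b /b' /c /qform !trmx_mul !trmxK !mulmxA.
have K_eq : c + qform V y = b'.
  have : (y^T *m K *m y) 0 0 = b' by rewrite /b' /y -mulmxA mulKVmx // !mulmxA.
  by rewrite /K mulmxDr mulmxDl mxE /c /qform !mulmxA.
by rewrite form_eq; have := S_psd (x - C^T *m y); have := V_psd y; lra.
Qed.

End QuadraticForms.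

(* Over any field, the diagonal entries of a diagonalisation M = P^-1 diag(d) P
   are eigenvalues of M (the rows of P are the eigenvectors). *)
Lemma eigenvalue_diagonalised (F : fieldType) n (M P : 'M[F]_n) (d : 'rV[F]_n) j :
  P \in unitmx -> M = invmx P *m diag_mx d *m P -> eigenvalue M (d 0 j).
Proof.
move=> P_unit M_eq; apply/eigenvalueP; exists (row j P).
  have : P *m M = diag_mx d *m P by rewrite M_eq !mulmxA mulmxV // mul1mx.
  by move/(congr1 (row j)); rewrite !row_mul row_diag_mx -scalemxAl -rowE.
apply/eqP => Pj0; have := congr1 (row j) (mulmxV P_unit).
rewrite row_mul Pj0 mul0mx => /rowP/(_ j); rewrite !mxE eqxx /=.
by move/eqP; rewrite eq_sym oner_eq0.
Qed.

Section MinEigenvalue.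
Variable R : rcfType.
Local Notation toC := (real_complex R).

Lemma conj_real_mx m n (A : 'M[R]_(m, n)) : map_mx Num.conj (map_mx toC A) = map_mx toC A.
Proof. by apply/matrixP => i j; rewrite !mxE; apply: conjc_real. Qed.

(* The quadratic form of a real symmetric matrix is bounded below by any lower
   bound lam of its eigenvalues times the squared norm (via the complex
   spectral theorem for the hermitian complexification). *)
Lemma min_eigenvalue_qform n (W : 'M[R]_n) lam :
  W^T = W -> (forall a, eigenvalue W a -> lam <= a) ->
  forall v : 'cV[R]_n, lam * \sum_j v j 0 ^+ 2 <= qform W v.
Proof.
move=> W_sym lam_min v; pose Wc := map_mx toC W.
have Wc_herm : Wc \is hermsymmx.
  apply/is_hermitianmxP; rewrite expr0 scale1r /Wc.
  rewrite -map_trmx conj_real_mx -[in LHS]W_sym.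
  by apply/matrixP => i j; rewrite !mxE.
have /orthomx_spectralP Wc_eq := hermitian_normalmx Wc_herm.
set P := spectralmx Wc in Wc_eq; set d := spectral_diag Wc in Wc_eq.
have P_unitary : P \is unitarymx := spectral_unitarymx Wc.
have d_ge : forall j, toC lam <= d 0 j.
  move=> j; have /complex_realP [r d_r] : d 0 j \is Num.real.
    exact: mxOverP (hermitian_spectral_diag_real Wc_herm) _ _.
  have := eigenvalue_diagonalised j (unitarymx_unit P_unitary) Wc_eq.
  by rewrite d_r eigenvalue_map lecR => /lam_min.
pose w := map_mx toC v; pose y := w^T *m (P^t*)%sesqui.
have y_star : (y^t*)%sesqui = P *m w.
  rewrite /y trmx_mul map_mxM trmxCK; congr (_ *m _).
  by rewrite trmxK conj_real_mx.
have form_eq : toC (qform W v) = (y *m diag_mx d *m (y^t*)%sesqui) 0 0.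
  transitivity ((w^T *m Wc *m w) 0 0); first by rewrite map_trmx -!map_mxM mxE.
  by rewrite y_star /y {1}Wc_eq invmx_unitary // !mulmxA.
have norm_eq : toC (\sum_j v j 0 ^+ 2) = (y *m (y^t*)%sesqui) 0 0.
  transitivity ((w^T *m w) 0 0).
    rewrite rmorph_sum mxE; apply: eq_bigr => j _.
    by rewrite !mxE rmorphXn expr2.
  rewrite y_star /y !mulmxA -(mulmxA _ _ P) (mulmx1C (unitarymxP P_unitary)).
  by rewrite mulmx1.
rewrite -lecR rmorphM /= form_eq norm_eq mul_mx_diag !mxE mulr_sumr.
apply: ler_sum => k _; rewrite !mxE mulrAC mulrC.
by rewrite ler_wpM2l ?mulcJ_ge0 ?d_ge.
Qed.
End MinEigenvalue.

Section KalmanBounds.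
Variable R : realFieldType.

Lemma innovation_unit n (S C V : 'M[R]_n) :
  (forall x, 0 <= qform S x) -> (forall x, x != 0 -> 0 < qform V x) ->
  C *m S *m C^T + V \in unitmx.
Proof.
move=> S_psd V_pd; apply: qform_pd_unit => x x_neq0.
by rewrite qformD qform_congr ltr_wpDl ?V_pd.
Qed.

(* A positive semidefinite solution of the Riccati equation dominates the
   process noise: S - W = H M H^T with M the psd Schur complement. *)
Lemma riccati_ge_noise n (H W S C V : 'M[R]_n) :
  (forall x, 0 <= qform S x) -> (forall x, 0 <= qform V x) ->
  C *m S *m C^T + V \in unitmx ->
  S = H *m S *m H^T
      - H *m S *m C^T *m invmx (C *m S *m C^T + V) *m C *m S *m H^T + W ->
  forall x, qform W x <= qform S x.
Proof.
move=> S_psd V_psd K_unit riccati x.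
set M := S - S *m C^T *m invmx (C *m S *m C^T + V) *m C *m S.
have -> : S = H *m M *m H^T + W by rewrite {1}riccati /M mulmxBr mulmxBl !mulmxA.
by rewrite qformD qform_congr lerDr schur_complement_psd.
Qed.

Lemma qform_invmx_ge0 n (S : 'M[R]_n) : S^T = S -> S \in unitmx ->
  (forall x, 0 <= qform S x) -> forall y, 0 <= qform (invmx S) y.
Proof.
move=> S_sym S_unit S_psd y; have := S_psd (invmx S *m y).
by rewrite /qform trmx_mul trmx_inv S_sym !mulmxA mulmxKV.
Qed.

Lemma invmx_diag n (d : 'rV[R]_n) : (forall i, d 0 i != 0) ->
  invmx (diag_mx d) = diag_mx (\row_i (d 0 i)^-1).
Proof.
move=> d_neq0; have inv_r : diag_mx d *m diag_mx (\row_i (d 0 i)^-1) = 1%:M.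
  apply/matrixP => i j; rewrite mulmx_diag !mxE.
  by case: (i == j); rewrite ?mulr1n ?mulr0n // mulfV.
have [d_unit _] := mulmx1_unit inv_r.
by rewrite -[RHS](mulKmx d_unit) inv_r mulmx1.
Qed.

Lemma measurement_information n (c s : 'rV[R]_n) : (forall i, s 0 i != 0) ->
  (diag_mx c)^T *m invmx (diag_mx (\row_i (s 0 i ^+ 2))) *m diag_mx c =
  diag_mx (\row_i (c 0 i ^+ 2 / s 0 i ^+ 2)).
Proof.
move=> s_neq0; rewrite invmx_diag => [|i]; last by rewrite mxE expf_neq0.
rewrite tr_diag_mx !mulmx_diag; congr diag_mx; apply/rowP => i.
by rewrite !mxE mulrC mulrA -expr2 mulrC.
Qed.

Lemma pd_eigenvalue_gt0 n (W : 'M[R]_n) a : pd W -> eigenvalue W a -> 0 < a.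
Proof.
move=> [W_sym W_pd] /eigenvalueP [z zW z_neq0].
have := W_pd z^T; rewrite trmx_eq0 => /(_ z_neq0).
rewrite trmxK zW -scalemxAl mxE.
have zz_ge0 : 0 <= (z *m z^T) 0 0.
  by rewrite mxE; apply: sumr_ge0 => j _; rewrite mxE -expr2 sqr_ge0.
by apply: contraTT; rewrite -!leNgt => a_le0; rewrite mulr_le0_ge0.
Qed.

Lemma posterior_diag_bounds n (dd : 'rV[R]_n) (P : 'M[R]_n) p i :
  (forall j, 0 < dd 0 j) -> P^T = P -> (forall x, 0 <= qform P x) -> P i i <= p ->
  (dd 0 i + p)^-1 <= invmx (diag_mx dd + P) i i <= (dd 0 i)^-1.
Proof.
move=> dd_gt0 P_sym P_psd Pii_le; set A := diag_mx dd + P.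
have A_sym : A^T = A by rewrite /A linearD /= tr_diag_mx P_sym.
have A_unit : A \in unitmx.
  by apply: qform_pd_unit => x x_neq0; rewrite qformD ltr_pwDl ?qform_diag_gt0.
have Pii_ge0 : 0 <= P i i by rewrite -qform_delta.
have Aii : A i i = dd 0 i + P i i by rewrite !mxE eqxx mulr1n.
have Aii_gt0 : 0 < A i i by rewrite Aii ltr_pwDl.
have A_psd : forall x, 0 <= qform A x.
  by move=> x; rewrite qformD addr_ge0 ?qform_diag_ge0 // => j; apply: ltW.
apply/andP; split.
  apply: le_trans (invmx_diag_ge A_sym A_unit A_psd Aii_gt0).
  by rewrite lef_pV2 ?posrE ?Aii ?lerD2l // ltr_pwDl // (le_trans Pii_ge0).
apply: invmx_diag_le => // x; rewrite qformD.
by rewrite (le_trans (qform_diag_term x i (fun j => ltW (dd_gt0 j)))) ?lerDl.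
Qed.
End KalmanBounds.

Lemma mxtrace_ge (R : numDomainType) n (A : 'M[R]_n) a :
  (forall i, a <= A i i) -> n%:R * a <= \tr A.
Proof.
by move=> le_a; rewrite mulr_natl -[n in a *+ n]card_ord -sumr_const; apply: ler_sum.
Qed.

Lemma mxtrace_le (R : numDomainType) n (A : 'M[R]_n) a :
  (forall i, A i i <= a) -> \tr A <= n%:R * a.
Proof.
by move=> le_a; rewrite mulr_natl -[n in a *+ n]card_ord -sumr_const; apply: ler_sum.
Qed.

(* Steady-state Riccati solution: a psd solution Sigma, with positive definite
   process noise W of smallest eigenvalue lam and positive definite measurement
   noise V, satisfies Sigma >= W >= lam I; hence it is invertible and its
   inverse (the prior precision) has diagonal entries at most 1/lam. *)
Lemma riccati_precision_diag_le (R : rcfType) n (H W S C V : 'M[R]_n) lam :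
  pd W -> is_min_eigenvalue W lam -> psd S ->
  (forall x, x != 0 -> 0 < qform V x) ->
  S = H *m S *m H^T
      - H *m S *m C^T *m invmx (C *m S *m C^T + V) *m C *m S *m H^T + W ->
  S \in unitmx /\ forall i, invmx S i i <= lam^-1.
Proof.
move=> W_pd [lam_eig lam_min] [_ S_psd] V_pd riccati; have [W_sym W_pos] := W_pd.
have lam_gt0 : 0 < lam := pd_eigenvalue_gt0 W_pd lam_eig.
have V_psd : forall x, 0 <= qform V x.
  move=> x; have [->|/V_pd/ltW //] := eqVneq x 0.
  by rewrite /qform mulmx0 mxE.
have K_unit := innovation_unit C S_psd V_pd.
have W_le_S := riccati_ge_noise S_psd V_psd K_unit riccati.
have S_unit : S \in unitmx.
  by apply: qform_pd_unit => x /W_pos Wx_gt0; apply: lt_le_trans Wx_gt0 (W_le_S x).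
split=> // i; apply: invmx_diag_le => // x.
apply: le_trans (W_le_S x); apply: le_trans (min_eigenvalue_qform W_sym lam_min x).
rewrite ler_pM2l // (bigD1 i) //= lerDl.
by apply: sumr_ge0 => j _; apply: sqr_ge0.
Qed.

Theorem theorem2 (R : rcfType) (n m : nat)
  (H W : 'M[R]_n.+1) (D : 'M[R]_(n.+1, m))
  (c sigma : 'rV[R]_n.+1) (Sigma : 'M[R]_n.+1) (l u : 'I_n.+1) (lam : R) :
  pd W ->
  W = D *m D^T ->
  (forall i, c 0 i != 0) ->
  (forall i, 0 < sigma 0 i) ->
  let C := diag_mx c in
  let V := diag_mx (\row_i (sigma 0 i ^+ 2)) in
  observable H C ->
  controllable H D ->
  psd Sigma ->
  Sigma = H *m Sigma *m H^T
          - H *m Sigma *m C^T *m invmx (C *m Sigma *m C^T + V) *m C *m Sigma *m H^T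
          + W ->
  (forall i, c 0 l ^+ 2 / sigma 0 l ^+ 2 <= c 0 i ^+ 2 / sigma 0 i ^+ 2) ->
  (forall i, c 0 i ^+ 2 / sigma 0 i ^+ 2 <= c 0 u ^+ 2 / sigma 0 u ^+ 2) ->
  is_min_eigenvalue W lam ->
  let Sigmabar := invmx (C^T *m invmx V *m C + invmx Sigma) in
  (n.+1)%:R * sigma 0 u ^+ 2 / (c 0 u ^+ 2 + sigma 0 u ^+ 2 * lam^-1) <= \tr Sigmabar /\
  \tr Sigmabar <= (n.+1)%:R * (sigma 0 l ^+ 2 / c 0 l ^+ 2).
Proof.
move=> W_pd _ c_neq0 sigma_gt0 C V _ _ S_psd riccati le_l le_u lam_min Sigmabar.
have V_pd : forall x, x != 0 -> 0 < qform V x.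
  by move=> x; apply: qform_diag_gt0 => j; rewrite mxE exprn_gt0.
have [S_unit prior_le] := riccati_precision_diag_le W_pd lam_min S_psd V_pd riccati.
have [S_sym _] := S_psd; have lam_gt0 := pd_eigenvalue_gt0 W_pd lam_min.1.
pose dd := \row_i (c 0 i ^+ 2 / sigma 0 i ^+ 2).
have dd_gt0 : forall j, 0 < dd 0 j.
  by move=> j; rewrite mxE divr_gt0 ?exprn_even_gt0 ?c_neq0 ?gt_eqF ?sigma_gt0.
have P_sym : (invmx Sigma)^T = invmx Sigma by rewrite trmx_inv S_sym.
have bounds i := posterior_diag_bounds dd_gt0 P_sym
  (qform_invmx_ge0 S_sym S_unit S_psd.2) (prior_le i).
rewrite /Sigmabar measurement_information => [|i]; last by rewrite gt_eqF.
have lower_eq :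
  (dd 0 u + lam^-1)^-1 = sigma 0 u ^+ 2 / (c 0 u ^+ 2 + sigma 0 u ^+ 2 / lam).
  by rewrite -invf_div; congr _^-1; rewrite mxE; field; rewrite !gt_eqF.
split.
  rewrite -mulrA -lower_eq; apply: mxtrace_ge => i.
  apply: le_trans (andP (bounds i)).1.
  by rewrite lef_pV2 ?posrE ?lerD2r ?addr_gt0 ?invr_gt0 // !mxE le_u.
rewrite -invf_div; apply: mxtrace_le => i; apply: le_trans (andP (bounds i)).2 _.
have := dd_gt0 l; rewrite mxE => ddl_gt0.
by rewrite lef_pV2 ?posrE // mxE le_l.
Qed.
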